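(* Let $k<l$ be positive integers and let $\gamma\in U(k,l)$ be diagonalizable with all eigenvalues of modulus $1$. Then $\gamma$ has an eigenvector in $N_-^{k,l}\cup N_+^{k,l}$.
   Context: $\prec u,v\succ_{k,l}=-\sum_{j=1}^k u_j\bar v_j+\sum_{j=k+1}^{k+l}u_j\bar v_j$ on $\mathbb{C}^{k+l}$; $N_-^{k,l}$, $N_+^{k,l}$ are the sets of vectors $v$ with $\prec v,v\succ_{k,l}<0$, respectively $>0$; $U(k,l)$ is the group of matrices in $GL(k+l,\mathbb{C})$ preserving the form. *)

From HB Require Import structures.
From mathcomp Require Import all_boot all_order all_algebra.
From mathcomp Require Import complex.
From mathcomp Require Import reals.
Set Implicit Arguments. Unset Strict Implicit. Unset Printing Implicit Defensive.
Import Order.TTheory GRing.Theory Num.Theory.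
Local Open Scope ring_scope.

Definition hform (C : numClosedFieldType) (k l : nat) (u v : 'cV[C]_(k + l)) : C :=
  \sum_(j < k + l) (if (j < k)%N then -1 else 1) * u j 0 * (v j 0)^*.

Definition Nminus (C : numClosedFieldType) (k l : nat) (v : 'cV[C]_(k + l)) : Prop :=
  hform v v < 0.
Definition Nplus (C : numClosedFieldType) (k l : nat) (v : 'cV[C]_(k + l)) : Prop :=
  0 < hform v v.

Definition in_U (C : numClosedFieldType) (k l : nat) (g : 'M[C]_(k + l)) : Prop :=
  g \in unitmx /\ forall u v : 'cV[C]_(k + l), hform (g *m u) (g *m v) = hform u v.

Definition eigenvector_of (C : fieldType) (n : nat) (g : 'M[C]_n) (v : 'cV[C]_n) : Prop :=
  v != 0 /\ exists a : C, g *m v = a *: v.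

From HB Require Import structures.
From mathcomp Require Import all_boot all_order all_algebra.
From mathcomp Require Import complex.
From mathcomp Require Import reals.
From mathcomp Require Import ring.
From Stdlib Require Import Classical.

Set Implicit Arguments.
Unset Strict Implicit.
Unset Printing Implicit Defensive.
Import Order.TTheory GRing.Theory Num.Theory.
Local Open Scope ring_scope.

(* If every eigenvector of [g] were null, each eigenspace would be totally
   isotropic by polarization, and eigenspaces for distinct eigenvalues [a], [b]
   would be orthogonal, since <v,w> = <gv,gw> = a b^* <v,w> and a b^* = a / b <> 1
   for |b| = 1.  An eigenbasis would then make the form vanish identically,
   whereas the form is nonzero as soon as l > 0, which is all that is used
   of the hypotheses on k and l. *)

Section HermitianForm.
Variables (C : numClosedFieldType) (k l : nat).
Local Notation V := 'cV[C]_(k + l).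

Lemma hformZl a (u v : V) : hform (a *: u) v = a * hform u v.
Proof. by rewrite /hform mulr_sumr; apply: eq_bigr => j _; rewrite mxE; ring. Qed.

Lemma hformZr a (u v : V) : hform u (a *: v) = a^* * hform u v.
Proof.
by rewrite /hform mulr_sumr; apply: eq_bigr => j _; rewrite mxE rmorphM /= mulrCA.
Qed.

Lemma hformDl (u w v : V) : hform (u + w) v = hform u v + hform w v.
Proof.
by rewrite /hform -big_split; apply: eq_bigr => j _; rewrite mxE mulrDr mulrDl.
Qed.

Lemma hformDr (u w v : V) : hform v (u + w) = hform v u + hform v w.
Proof.
by rewrite /hform -big_split; apply: eq_bigr => j _; rewrite mxE rmorphD /= mulrDr.
Qed.

Lemma hform0l (v : V) : hform 0 v = 0.
Proof. by rewrite -(scale0r 0) hformZl mul0r. Qed.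

Lemma hform0r (v : V) : hform v 0 = 0.
Proof. by rewrite -(scale0r 0) hformZr rmorph0 mul0r. Qed.

Lemma hformC (u v : V) : hform u v = (hform v u)^*.
Proof.
rewrite /hform rmorph_sum; apply: eq_bigr => j _.
by rewrite !rmorphM /= conjCK; case: ifP => _; rewrite ?rmorphN rmorph1; ring.
Qed.

Lemma hform_real (v : V) : hform v v \is Num.real.
Proof.
apply: rpred_sum => j _; rewrite -mulrA; apply: rpredM.
  by case: ifP => _; rewrite ?rpredN rpred1.
exact/ger0_real/mul_conjC_ge0.
Qed.

Lemma hform_mull (Q : 'M[C]_(k + l)) (c u : V) :
  hform (Q *m c) u = \sum_i c i 0 * hform (col i Q) u.
Proof.
rewrite /hform; under [RHS]eq_bigr do rewrite mulr_sumr.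
rewrite [RHS]exchange_big /=; apply: eq_bigr => j _.
by rewrite mxE mulr_sumr mulr_suml; apply: eq_bigr => i _; rewrite !mxE; ring.
Qed.

Lemma hform_mulr (Q : 'M[C]_(k + l)) (c u : V) :
  hform u (Q *m c) = \sum_i (c i 0)^* * hform u (col i Q).
Proof.
rewrite hformC hform_mull rmorph_sum; apply: eq_bigr => i _.
by rewrite rmorphM /= -hformC.
Qed.

Lemma hform_eq0_orthogonal_basis (Q : 'M[C]_(k + l)) (u v : V) :
  Q \in unitmx -> (forall i j, hform (col i Q) (col j Q) = 0) -> hform u v = 0.
Proof.
move=> Qu Qorth; rewrite -(mulKVmx Qu u) -(mulKVmx Qu v) hform_mull.
rewrite big1 // => i _; rewrite hform_mulr big1 ?mulr0 // => j _.
by rewrite Qorth mulr0.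
Qed.

Lemma hform_polarization_eq0 (v w : V) :
  hform v v = 0 -> hform w w = 0 ->
  hform (v + w) (v + w) = 0 -> hform (v + 'i *: w) (v + 'i *: w) = 0 ->
  hform v w = 0.
Proof.
move=> vv0 ww0; rewrite !(hformDl, hformDr, hformZl, hformZr) vv0 ww0 conjCi.
rewrite !mulr0 !addr0 !add0r => /eqP; rewrite addrC addr_eq0 => /eqP ->.
rewrite mulrN mulNr -opprD -mulr2n => /eqP; rewrite oppr_eq0 -mulr_natl.
by rewrite !mulf_eq0 pnatr_eq0 (negbTE (neq0Ci _)) => /eqP.
Qed.

Lemma hform_delta_ge (j : 'I_(k + l)) :
  (k <= j)%N -> hform (delta_mx j 0 : V) (delta_mx j 0) = 1.
Proof.
move=> kj; rewrite /hform (bigD1 j) //= !mxE !eqxx ltnNge kj conjC1 !mulr1.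
by rewrite big1 ?addr0 // => i /negbTE ij; rewrite !mxE ij mulr0 mul0r.
Qed.

End HermitianForm.

Lemma diagonalizable_eigenbasis (F : fieldType) (n : nat) (g : 'M[F]_n) :
  diagonalizable g ->
  exists2 Q, Q \in unitmx & forall i, exists a, g *m col i Q = a *: col i Q.
Proof.
move=> [P Pu Pd]; exists (invmx P); first by rewrite unitmx_inv.
have /is_diag_mxP Dd : is_diag_mx (P *m g *m invmx P) by rewrite -conjumx.
set D := P *m g *m invmx P in Dd *; move=> i; exists (D i i).
have -> : g *m col i (invmx P) = col i (invmx P *m D).
  by rewrite !colE /D !mulmxA mulVmx // mul1mx.
apply/matrixP => j z; rewrite (ord1 z) [LHS]mxE [in RHS]mxE [LHS]mxE.
rewrite (bigD1 i) //= big1 ?addr0; first by rewrite mulrC; congr (_ * _); rewrite mxE.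
by move=> i' /Dd ->; rewrite mulr0.
Qed.

Lemma conjC_mul_unimodular (C : numClosedFieldType) (a b : C) :
  `|b| = 1 -> a * b^* = 1 -> a = b.
Proof. by move=> b1 abC; rewrite -[a]mulr1 -(expr1n _ 2) -b1 normCKC mulrA abC mul1r. Qed.

Section Isometry.
Variables (C : numClosedFieldType) (k l : nat) (g : 'M[C]_(k + l)).
Local Notation V := 'cV[C]_(k + l).
Hypothesis g_isometry : forall u v : V, hform (g *m u) (g *m v) = hform u v.
Hypothesis eigenvalue_unimodular :
  forall a, (exists2 v : V, v != 0 & g *m v = a *: v) -> `|a| = 1.

Lemma hform_eigen_eq0 (v w : V) a b :
  a != b -> g *m v = a *: v -> g *m w = b *: w -> hform v w = 0.
Proof.
move=> ab gv gw; have [->|wn] := eqVneq w 0; first exact: hform0r.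
have b1 : `|b| = 1 by apply: eigenvalue_unimodular; exists w.
have : (a * b^* - 1) * hform v w = 0.
  by rewrite mulrBl -mulrA -hformZr -hformZl -gv -gw g_isometry mul1r subrr.
move/eqP; rewrite mulf_eq0 subr_eq0 => /orP [/eqP abC|/eqP //].
by move: ab; rewrite (conjC_mul_unimodular b1 abC) eqxx.
Qed.

Lemma hform_same_eigen_eq0 (v w : V) a :
  (forall x : V, g *m x = a *: x -> hform x x = 0) ->
  g *m v = a *: v -> g *m w = a *: w -> hform v w = 0.
Proof.
move=> iso gv gw; apply: hform_polarization_eq0; apply: iso => //.
  by rewrite mulmxDr gv gw scalerDr.
by rewrite mulmxDr -scalemxAr gv gw scalerDr !scalerA mulrC.
Qed.

End Isometry.

Theorem mainTheorem16 (R : realType) (k l : nat) (g : 'M[R[i]]_(k + l)) :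
  (0 < k)%N -> (k < l)%N ->
  in_U g ->
  diagonalizable g ->
  (forall a : R[i], (exists2 v : 'cV[R[i]]_(k + l), v != 0 & g *m v = a *: v) -> `|a| = 1) ->
  exists v : 'cV[R[i]]_(k + l), eigenvector_of g v /\ (Nminus v \/ Nplus v).
Proof.
move=> _ kl [_ g_iso] /diagonalizable_eigenbasis [Q Qu Qeig] unimod.
apply: NNPP => no_nonnull.
have isotropic x a : g *m x = a *: x -> hform x x = 0.
  move=> gx; have [->|xn] := eqVneq x 0; first exact: hform0l.
  have [//|xx] := eqVneq (hform x x) 0; case: no_nonnull; exists x.
  split; first by split=> //; exists a.
  by move: xx; rewrite (real_neqr_lt (hform_real x) (rpred0 _)) => /orP [] ?; [left|right].
have orth v w a b : g *m v = a *: v -> g *m w = b *: w -> hform v w = 0.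
  have [<-|ab] := eqVneq a b; last exact: hform_eigen_eq0.
  by apply: hform_same_eigen_eq0 => x; apply: isotropic.
have kn : (k < k + l)%N by rewrite -addn1 leq_add2l (leq_ltn_trans _ kl).
have := @hform_delta_ge R[i] k l (Ordinal kn) (leqnn k).
rewrite (hform_eq0_orthogonal_basis _ _ Qu) => [/eqP|i j]; first by rewrite eq_sym oner_eq0.
by have [[a gi] [b gj]] := (Qeig i, Qeig j); apply: orth gi gj.
Qed.
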